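(* Let $X$ be a Cantor set with a compatible metric $d$, and let $\sigma$ be an aperiodic homeomorphism of $X$ whose minimal sets are exactly $Y_1,\dots,Y_k$ ($k<\infty$). For $i=1,\dots,k$ let $$E_i=\{x\in X:\ \text{for every }\varepsilon>0\text{ there is an }\varepsilon\text{-chain from }x\text{ to some point of }Y_i\}.$$ Then $\sigma$ is chain transitive if and only if $E_1=E_2=\dots=E_k=X$.
   Context: $\sigma$ is aperiodic if every $\sigma$-orbit is infinite. A minimal set is a nonempty closed $\sigma$-invariant set with no nonempty proper closed invariant subset. An $\varepsilon$-chain from $x$ to $y$ is a finite sequence $x_0=x,x_1,\dots,x_n=y$ with $d(\sigma(x_i),x_{i+1})<\varepsilon$ for all $i<n$. $\sigma$ is chain transitive if for all $x,y\in X$ and every $\varepsilon>0$ there is an $\varepsilon$-chain from $x$ to $y$. *)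

From HB Require Import structures.
From mathcomp Require Import all_boot all_order all_algebra.
From mathcomp Require Import all_classical all_reals all_analysis.
Set Implicit Arguments. Unset Strict Implicit. Unset Printing Implicit Defensive.
Import Order.TTheory GRing.Theory Num.Theory.
Local Open Scope classical_set_scope.
Local Open Scope ring_scope.

Section Dyn.
Context {R : realType} {X : metricType R}.

Definition is_homeomorphism (s : X -> X) : Prop :=
  continuous s /\ exists g : X -> X, [/\ continuous g, cancel s g & cancel g s].

(* the (two-sided) sigma-orbit of x: { s^n x : n in Z };
   y = s^(-n) x is expressed as s^n y = x *)
Definition orbit (s : X -> X) (x : X) : set X :=
  [set y | exists n : nat, iter n s x = y \/ iter n s y = x].

Definition aperiodic (s : X -> X) : Prop :=
  forall x, ~ finite_set (orbit s x).

Definition invariant (s : X -> X) (A : set X) : Prop := s @` A = A.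

Definition minimal_set (s : X -> X) (A : set X) : Prop :=
  [/\ A !=set0, closed A, invariant s A &
      forall B : set X, B `<=` A -> B !=set0 -> closed B -> invariant s B -> B = A].

Definition eps_chain (s : X -> X) (eps : R) (x y : X) : Prop :=
  exists (n : nat) (c : nat -> X),
    [/\ c 0%N = x, c n = y &
        forall i, (i < n)%N -> mdist (s (c i)) (c i.+1) < eps].

Definition chain_transitive (s : X -> X) : Prop :=
  forall x y (eps : R), 0 < eps -> eps_chain s eps x y.

Definition E_set (s : X -> X) (Y : set X) : set X :=
  [set x | forall eps : R, 0 < eps -> exists2 y, Y y & eps_chain s eps x y].

End Dyn.

From HB Require Import structures.
From mathcomp Require Import all_boot all_order all_algebra.
From mathcomp Require Import all_classical all_reals all_analysis.
From mathcomp Require Import lra.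
Local Open Scope classical_set_scope.
Local Open Scope ring_scope.
Import Order.TTheory GRing.Theory Num.Theory.

(* Given x, y and eps, the points from which y
   can be reached by arbitrarily fine chains form a nonempty closed set that is
   invariant under sigma^-1; by compactness and Zorn's lemma it contains a
   minimal set, hence some Y_i. Since x chains into Y_i, it chains to y. *)

Lemma Zorn_bigcap T (P : set (set T)) (A : set T) :
  (forall F, F `<=` P -> F !=set0 -> total_on F subset ->
    P (\bigcap_(B in F) B)) ->
  P A -> exists M, [/\ P M, M `<=` A & forall B, P B -> B `<=` M -> B = M].
Proof.
move=> chainP PA.
pose S := {B : set T | P B /\ B `<=` A}.
pose R (b c : S) := `[< sval c `<=` sval b >].
have [[M [PM MA]] Mmin] : exists b : S, forall c, R b c -> c = b.
  apply: Zorn.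
  - by move=> b; apply/asboolP.
  - move=> a b c /asboolP ba /asboolP cb.
    by apply/asboolP; exact: subset_trans cb ba.
  - by move=> [B ?] [C ?] /asboolP CB /asboolP BC; exact/eq_exist/seteqP.
  move=> C Ctot; have [[c0 Cc0]|C0] := pselect (C !=set0); last first.
    exists (exist _ A (conj PA (@subset_refl _ A))) => c Cc.
    by case: C0; exists c.
  have PC : P (\bigcap_(c in C) sval c) /\ \bigcap_(c in C) sval c `<=` A.
    split; last by move=> x /(_ c0 Cc0); case: c0 {Cc0} => B [_ BA] /BA.
    rewrite -(bigcap_image C sval id); apply: chainP.
    + by move=> _ [b _ <-]; case: (svalP b).
    + by exists (sval c0), c0.
    move=> _ _ [b Cb <-] [c Cc <-].
    by have [/asboolP|/asboolP] := Ctot _ _ Cb Cc; [right|left].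
  exists (exist _ (\bigcap_(c in C) sval c) PC) => c Cc.
  by apply/asboolP; exact: bigcap_inf.
exists M; split=> // B PB BM.
have BA : B `<=` A := subset_trans BM MA.
by have /(congr1 sval) := Mmin (exist _ B (conj PB BA)) (asboolT BM).
Qed.

Lemma closed_chain_bigcap_neq0 (T : topologicalType) (F : set (set T)) :
  compact [set: T] -> F !=set0 -> total_on F subset ->
  (forall B, F B -> closed B) -> (forall B, F B -> B !=set0) ->
  \bigcap_(B in F) B !=set0.
Proof.
move=> cT [B0 FB0] Ftot Fcl F0.
pose G := filter_from F id.
have GF : Filter G.
  apply: filter_from_filter; first by exists B0.
  move=> B C FB FC; have [BC|CB] := Ftot B C FB FC.
    by exists B => // x Bx; split=> //; exact: BC.
  by exists C => // x Cx; split=> //; exact: CB.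
have GP : ProperFilter G by apply: filter_from_proper => B /F0.
have [z [_ Gz]] := cT G GP filterT.
exists z => B FB; move: (Fcl B FB); rewrite closure_id => ->.
by move=> N zN; apply: Gz zN; exists B.
Qed.

Lemma minimal_set_sub {R : realType} {X : metricType R} (s : X -> X)
    (A : set X) :
  compact [set: X] -> continuous s -> injective s ->
  A !=set0 -> closed A -> A `<=` s @` A ->
  exists2 M, minimal_set s M & M `<=` A.
Proof.
move=> cX s_cont s_inj A0 Acl As.
pose P (B : set X) := [/\ B !=set0, closed B & B `<=` s @` B].
have [|M [[M0 Mcl Ms] MA Mmin]] := @Zorn_bigcap _ P A _ (And3 A0 Acl As).
  move=> F FP F0 Ftot; split.
  - by apply: closed_chain_bigcap_neq0 => // B /FP[].
  - by apply: closed_bigI => B /FP[].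
  move=> x Fx; have [B0 FB0] := F0.
  have [_ _ /(_ x (Fx B0 FB0))[y B0y syx]] := FP B0 FB0.
  exists y => // B FB; have [_ _ /(_ x (Fx B FB))[y' By' sy'x]] := FP B FB.
  by rewrite -(s_inj y' y) // sy'x syx.
have MsM : M `&` s @^-1` M = M.
  apply: Mmin; last exact: subIsetl; split.
  - have [x Mx] := M0; have [m Mm smx] := Ms x Mx.
    by exists m; split; rewrite //= smx.
  - by apply: closedI => //; exact: (proj1 (continuous_closedP s) s_cont).
  - move=> x [Mx _]; have [y My syx] := Ms x Mx.
    by exists y => //; split; rewrite //= syx.
exists M => //; split=> //; rewrite /invariant.
  apply/seteqP; split=> [_ [x Mx <-]|//].
  by have [] : (M `&` s @^-1` M) x by rewrite MsM.
by move=> B BM B0 Bcl Bs; apply: Mmin => //; split; rewrite // Bs.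
Qed.

Section Chains.
Context {R : realType} {X : metricType R} (s : X -> X).

Lemma eps_chain_refl (e : R) (x : X) : eps_chain s e x x.
Proof. by exists 0%N, (fun=> x). Qed.

Lemma eps_chain_le {e e' : R} {x y : X} :
  e <= e' -> eps_chain s e x y -> eps_chain s e' x y.
Proof.
move=> ee' [n [c [c0 cn hc]]]; exists n, c; split=> // i /hc h.
exact: lt_le_trans h ee'.
Qed.

Lemma eps_chain_cons {e : R} {p q y : X} :
  mdist (s p) q < e -> eps_chain s e q y -> eps_chain s e p y.
Proof.
move=> hpq [n [c [c0 cn hc]]].
exists n.+1, (fun i => if i is j.+1 then c j else p); split=> //.
by case=> [_|i]; [rewrite c0 | rewrite ltnS => /hc].
Qed.

Lemma eps_chain_trans {e : R} {x a y : X} :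
  eps_chain s e x a -> eps_chain s e a y -> eps_chain s e x y.
Proof.
move=> [n [c [<- <- hc]]]; elim: n c hc => [|n IH] c hc // ay.
apply: (@eps_chain_cons _ _ (c 1%N)); first exact: hc.
by apply: (IH (fun i => c i.+1)) => // i hi; apply: hc.
Qed.

(* Requiring chains of positive length is what makes this set closed. *)
Definition chains_to (y : X) : set X :=
  [set p | forall e : R, 0 < e ->
    exists2 q, mdist (s p) q < e & eps_chain s e q y].

Lemma chains_to_eps_chain {y p : X} {e : R} :
  chains_to y p -> 0 < e -> eps_chain s e p y.
Proof. by move=> yp /yp[q spq qy]; exact: eps_chain_cons spq qy. Qed.

Lemma chains_to_preimage (y q : X) :
  (forall e : R, 0 < e -> eps_chain s e (s q) y) -> chains_to y q.
Proof. by move=> sqy e e0; exists (s q); rewrite ?mdistxx //; exact: sqy. Qed.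

Lemma chains_to_closed (y : X) : continuous s -> closed (chains_to y).
Proof.
move=> s_cont; rewrite closure_id.
apply/seteqP; split; first exact: subset_closure.
move=> p clp e e0; have e20 : 0 < e / 2 by rewrite divr_gt0.
have /clp[p' [yp' /= sp'p]] := s_cont p _ (nbhsx_ballx _ _ e20).
have [q sp'q qy] := yp' _ e20; rewrite ballEmdist /= in sp'p.
exists q; last by apply: eps_chain_le qy; lra.
apply: le_lt_trans (metric_triangle _ (s p') _) _.
by rewrite [e]splitr ltrD.
Qed.

End Chains.

Theorem theorem10p15 (R : realType) (X : metricType R)
  (cantorX : cantor_like X) (neX : [set: X] !=set0)
  (sigma : X -> X) (hsigma : is_homeomorphism sigma) (aper : aperiodic sigma)
  (k : nat) (Y : 'I_k -> set X)
  (hY : forall A : set X, minimal_set sigma A <-> exists i, A = Y i) :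
  chain_transitive sigma <-> (forall i, E_set sigma (Y i) = [set: X]).
Proof.
split=> [ct i|hE x y e e0].
  apply/seteqP; split=> // x _ e e0.
  have [[y Yy] _ _ _] := (hY (Y i)).2 (ex_intro _ i erefl).
  by exists y => //; exact: ct.
have [s_cont [g [_ sgK gsK]]] := hsigma.
have [_ cX _ _] := cantorX.
have yg p : chains_to sigma y p -> chains_to sigma y (g p).
  move=> yp; apply: chains_to_preimage => e' e'0.
  by rewrite gsK; exact: (chains_to_eps_chain sigma yp e'0).
have ygy : chains_to sigma y (g y).
  by apply: chains_to_preimage => e' _; rewrite gsK; exact: eps_chain_refl.
have [M minM My] : exists2 M, minimal_set sigma M & M `<=` chains_to sigma y.
  apply: minimal_set_sub => //; first exact: can_inj sgK.
  - by exists (g y).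
  - exact: chains_to_closed.
  - by move=> p yp; exists (g p); [exact: yg | rewrite gsK].
have [i Mi] := (hY M).1 minM.
have /(_ e e0)[a Ya xa] : E_set sigma (Y i) x by rewrite hE.
have {}Ya : chains_to sigma y a by apply: My; rewrite Mi.
exact: (eps_chain_trans sigma xa (chains_to_eps_chain sigma Ya e0)).
Qed.
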